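(* Assume Assumption 1, Assumption 2 and the null hypothesis $H_0:\ T_i(1)=T_i(0)$ for all $i$, and condition on $\boldsymbol{T}(1),\boldsymbol{T}(0)$. Then for each $1\le k\le K$, $$D_k\sim\mathrm{Bin}(d_k,g_k),\qquad N_{1k}\sim\mathrm{Bin}(n_k,g_k\phi_k),\qquad N_k\sim\mathrm{Bin}(n_k,g_k).$$
   Context: There are $n$ units. Unit $i$ has potential event times $T_i(1),T_i(0)\ge 0$, potential censoring times $C_i(1),C_i(0)\in[0,\infty]$, and treatment indicator $Z_i\in\{0,1\}$; bold letters denote $n$-vectors. Assumption 1: conditional on $\boldsymbol{T}(1),\boldsymbol{T}(0),\boldsymbol{C}(1),\boldsymbol{C}(0)$, the $Z_i$ are i.i.d. Bernoulli$(p_1)$, $p_1=1-p_0\in(0,1)$. Assumption 2: $(\boldsymbol{C}(1),\boldsymbol{C}(0))$ is independent of $(\boldsymbol{T}(1),\boldsymbol{T}(0))$ and the pairs $(C_i(1),C_i(0))$ are i.i.d. across $i$. $G_z(c)=\Pr(C_i(z)\ge c)$, $G(t)=p_1G_1(t)+p_0G_0(t)$. Realized: $W_i=\min\{T_i,C_i\}$, $\Delta_i=\mathbb{1}(T_i\le C_i)$ with $T_i=Z_iT_i(1)+(1-Z_i)T_i(0)$, $C_i=Z_iC_i(1)+(1-Z_i)C_i(0)$. Let $t_1<\dots<t_K$ be the distinct values of $\{T_i(0)\}$, $d_k=\#\{i:T_i(0)=t_k\}$, $n_k=\#\{i:T_i(0)\ge t_k\}$, $g_k=G(t_k)$, $\phi_k=p_1G_1(t_k)/G(t_k)$;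 $N_{1k}=\sum_iZ_i\mathbb{1}(W_i\ge t_k)$, $N_k=\sum_i\mathbb{1}(W_i\ge t_k)$, $D_k=\sum_i\Delta_i\mathbb{1}(W_i=t_k)$. $\mathrm{Bin}(m,p)$ denotes the binomial distribution. *)

From HB Require Import structures.
From mathcomp Require Import all_boot all_order all_algebra.
From mathcomp Require Import all_classical all_reals all_analysis.
From mathcomp Require Import measurable_realfun.
Set Implicit Arguments. Unset Strict Implicit. Unset Printing Implicit Defensive.
Import Order.TTheory GRing.Theory Num.Theory.
Local Open Scope classical_set_scope.
Local Open Scope ring_scope.

Section Survival.
Context {R : realType} {n : nat} {Omega : Type}.

Definition obsT (T1 T0 : 'I_n -> R) (Z : 'I_n -> Omega -> bool) i w : R :=
  if Z i w then T1 i else T0 i.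
Definition obsC (C1 C0 : 'I_n -> Omega -> \bar R) (Z : 'I_n -> Omega -> bool)
  i w : \bar R := if Z i w then C1 i w else C0 i w.
Definition obsW T1 T0 C1 C0 Z i w : \bar R :=
  Order.min (obsT T1 T0 Z i w)%:E (obsC C1 C0 Z i w).
Definition obsDelta T1 T0 C1 C0 Z i w : bool :=
  ((obsT T1 T0 Z i w)%:E <= obsC C1 C0 Z i w)%E.

Definition distinct_times (T0 : 'I_n -> R) : seq R :=
  sort <=%R (undup [seq T0 i | i <- enum 'I_n]).
Definition d_at (T0 : 'I_n -> R) (t : R) : nat := #|[set i | T0 i == t]|.
Definition n_at (T0 : 'I_n -> R) (t : R) : nat := #|[set i | t <= T0 i]|.

Definition cntD T1 T0 C1 C0 Z (t : R) w : nat :=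
  (\sum_(i < n) (obsDelta T1 T0 C1 C0 Z i w && (obsW T1 T0 C1 C0 Z i w == t%:E)))%N.
Definition cntN1 T1 T0 C1 C0 Z (t : R) w : nat :=
  (\sum_(i < n) (Z i w && (t%:E <= obsW T1 T0 C1 C0 Z i w)%E))%N.
Definition cntN T1 T0 C1 C0 Z (t : R) w : nat :=
  (\sum_(i < n) (t%:E <= obsW T1 T0 C1 C0 Z i w)%E)%N.

End Survival.

Section Assumptions.
Context {R : realType} {n : nat} {d : measure_display} {Omega : measurableType d}.
Variable P : probability Omega R.

(* Assumption 1 (given the fixed T's): conditional on (C(1), C(0)), the Z_i
   are i.i.d. Bernoulli(p1); expressed through the joint law on the
   generating pi-system of measurable rectangles. *)
Definition assumption1 (Z : 'I_n -> Omega -> bool)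
  (C1 C0 : 'I_n -> Omega -> \bar R) (p1 : R) : Prop :=
  forall (s : 'I_n -> bool) (A1 A0 : 'I_n -> set (\bar R)),
    (forall i, measurable (A1 i) /\ measurable (A0 i)) ->
    P [set w | forall i, Z i w = s i /\ A1 i (C1 i w) /\ A0 i (C0 i w)] =
    ((\prod_(i < n) (if s i then p1 else 1 - p1))%:E *
     P [set w | forall i, A1 i (C1 i w) /\ A0 i (C0 i w)])%E.

Definition assumption2 (C1 C0 : 'I_n -> Omega -> \bar R) : Prop :=
  (forall (A1 A0 : 'I_n -> set (\bar R)),
    (forall i, measurable (A1 i) /\ measurable (A0 i)) ->
    P [set w | forall i, A1 i (C1 i w) /\ A0 i (C0 i w)] =
    (\prod_(i < n) P [set w | A1 i (C1 i w) /\ A0 i (C0 i w)])%E) /\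
  (forall (A1 A0 : set (\bar R)) (i j : 'I_n),
    measurable A1 -> measurable A0 ->
    P [set w | A1 (C1 i w) /\ A0 (C0 i w)] =
    P [set w | A1 (C1 j w) /\ A0 (C0 j w)]).

End Assumptions.

(* Under H0 the realized event time of unit i is T_i(0) whatever Z_i is, so each of
   D_k, N_1k, N_k is a sum, over a FIXED set of units (T_i(0) = t_k, resp. T_i(0) >= t_k),
   of an event on the unit's profile (Z_i, 1(C_i(1) >= t_k), 1(C_i(0) >= t_k)).
   Assumptions 1 and 2 make the profiles independent, with the law of Z_i times the
   joint law of the two censoring indicators; a count of independent events of common
   probability q over m units is Bin(m, q), read off as the coefficient of X^j in
   ((1 - q) + q X)^m.  The event "observed at risk" has probability
   p1 G1 + p0 G0 = g_k, and "treated and at risk" has probability p1 G1 = g_k phi_k. *)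

From HB Require Import structures.
From mathcomp Require Import all_boot all_order all_algebra.
From mathcomp Require Import all_classical all_reals all_analysis.
From mathcomp Require Import measurable_realfun.
From mathcomp Require Import ring.
Set Implicit Arguments. Unset Strict Implicit. Unset Printing Implicit Defensive.
Import Order.TTheory GRing.Theory Num.Theory.
Local Open Scope classical_set_scope.
Local Open Scope ring_scope.

Section measure_facts.
Context d (T : measurableType d) (R : realType).

Lemma measurable_forall (I : finType) (F : I -> set T) :
  (forall i, measurable (F i)) -> measurable [set x | forall i, F i x].
Proof.
move=> mF; have -> : [set x | forall i, F i x] = \bigcap_(i in setT) F i.
  by apply/seteqP; split => x /= Fx i //; exact: Fx.
by apply: fin_bigcap_measurable => //; exact: finite_finset.
Qed.

Lemma measurable_eqb (f : T -> bool) (b : bool) :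
  measurable [set x | f x] -> measurable [set x | f x = b].
Proof.
case: b => // mf; have := measurableC mf; congr measurable.
by apply/seteqP; split => x /=; case: (f x).
Qed.

Variable mu : {measure set T -> \bar R}.

Lemma measure_preimage_pred (U : finType) (V : T -> U) (A : pred U) :
  (forall u, measurable [set x | V x = u]) ->
  mu [set x | A (V x)] = (\sum_(u | A u) mu [set x | V x = u])%E.
Proof.
move=> mV.
have -> : [set x | A (V x)] = \bigcup_(u in [set u | A u]) [set x | V x = u].
  apply/seteqP; split => x /=; first by move=> AVx; exists (V x).
  by move=> [u Au ->].
rewrite measure_fin_bigcup //; last 2 first.
- exact: finite_finset.
- by move=> u v _ _ [x [/= <- <-]].
rewrite (fsbigE (enum [pred u | A u])) ?enum_uniq //.
- rewrite big_enum_cond /=; apply: eq_bigl => u.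
  by rewrite inE; case Au: (A u); [exact: mem_set | ].
- by move=> u /=; rewrite mem_enum.
- by move=> u Au; rewrite mem_enum inE Au.
Qed.

Lemma measure_split_bool (A : set T) (f : T -> bool) :
  measurable A -> measurable [set x | f x] ->
  (mu (A `&` [set x | f x = true]) + mu (A `&` [set x | f x = false]) = mu A)%E.
Proof.
move=> mA mf; rewrite addeC (measureDI mu mA mf); congr (mu _ + mu _)%E.
by apply/seteqP; split => x /= [Ax fx]; split => //; move: fx; case: (f x).
Qed.

End measure_facts.

Lemma measurable_ge_ereal (R : realType) (t : R) :
  measurable [set c : \bar R | (t%:E <= c)%E].
Proof.
have := emeasurable_itv `[t%:E, +oo[; congr measurable.
by apply/seteqP; split => x /=; rewrite in_itv /= andbT.
Qed.

Lemma card_set_finset (T : finType) (p : pred T) :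
  #|[set x | p x]| = #|[set x | p x]%SET|.
Proof.
apply: eq_card => x; rewrite [in RHS]inE.
by apply/idP/idP => [/set_mem // | px]; exact: mem_set.
Qed.

Section count_generating_function.
Variables (R : comNzRingType) (I U : finType) (rho : I -> U -> R).

Lemma prod_sum_count_poly (h : I -> U -> bool) :
  \prod_i \sum_u (rho i u)%:P * 'X^(h i u) =
  \sum_(y : {ffun I -> U}) (\prod_i rho i (y i))%:P * 'X^(\sum_i h i (y i)).
Proof.
rewrite bigA_distr_bigA; apply: eq_bigr => y _.
by rewrite big_split /= prodrXr rmorph_prod.
Qed.

Lemma coef_count_poly (h : I -> U -> bool) (j : nat) :
  (\sum_(y : {ffun I -> U}) (\prod_i rho i (y i))%:P * 'X^(\sum_i h i (y i)))`_j =
  \sum_(y : {ffun I -> U} | (\sum_i h i (y i) == j)%N) \prod_i rho i (y i).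
Proof.
rewrite coef_sum [RHS]big_mkcond; apply: eq_bigr => y _.
by rewrite coefCM coefXn eq_sym; case: eqP; rewrite ?mulr1 ?mulr0.
Qed.

Lemma coef_binomial_poly (q : R) (m j : nat) :
  (((1 - q)%:P + q%:P * 'X) ^+ m)`_j = q ^+ j * (1 - q) ^+ (m - j) *+ 'C(m, j).
Proof.
rewrite exprDn coef_sum.
under eq_bigr => i _ do
  rewrite exprMn mulrA -!rmorphXn -polyCM coefMn coefCM coefXn.
case: (ltnP j m.+1) => [jm | mj].
  rewrite (bigD1 (Ordinal jm)) //= eqxx mulr1 big1 ?addr0; first by rewrite mulrC.
  move=> i /eqP ne; case: eqP => [e | _]; last by rewrite mulr0 mul0rn.
  by case: ne; apply: val_inj.
rewrite bin_small // mulr0n big1 // => i _.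
by case: eqP => [e | _]; [move: (ltn_ord i); rewrite -e ltnNge mj | rewrite mulr0 mul0rn].
Qed.

Lemma sum_prod_count_binomial (S : {set I}) (f : U -> bool) (q : R) (j : nat) :
  (forall i, \sum_u rho i u = 1) ->
  (forall i, i \in S -> \sum_(u | f u) rho i u = q) ->
  \sum_(y : {ffun I -> U} | (\sum_(i in S) f (y i) == j)%N) \prod_i rho i (y i)
  = q ^+ j * (1 - q) ^+ (#|S| - j) *+ 'C(#|S|, j).
Proof.
move=> rho1 rhoS; pose h i u := (i \in S) && f u.
have countE (y : {ffun I -> U}) : (\sum_(i in S) f (y i) = \sum_i h i (y i))%N.
  by rewrite big_mkcond; apply: eq_bigr => i _; rewrite /h; case: (i \in S).
have genE : \prod_i \sum_u (rho i u)%:P * 'X^(h i u) = ((1 - q)%:P + q%:P * 'X) ^+ #|S|.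
  rewrite -prodr_const (bigID (mem S)) /= [X in _ * X]big1 ?mulr1; last first.
    move=> i /negbTE iS; under eq_bigr => u _ do rewrite /h iS expr0 mulr1.
    by rewrite -rmorph_sum rho1 rmorph1.
  apply: eq_bigr => i iS; rewrite (bigID f) /= /h iS.
  under eq_bigr => u -> do rewrite expr1.
  under [X in _ + X]eq_bigr => u /negbTE -> do rewrite expr0 mulr1.
  rewrite -big_distrl /= -!rmorph_sum rhoS // addrC; congr (_%:P + _).
  by rewrite -(rho1 i) [in RHS](bigID f) /= rhoS // addrAC subrr add0r.
under eq_bigl do rewrite countE.
by rewrite -coef_count_poly -prod_sum_count_poly genE coef_binomial_poly.
Qed.

End count_generating_function.

Lemma sum_bool3 (V : nmodType) (F : bool * bool * bool -> V) :
  \sum_u F u = \sum_(a : bool) \sum_(b : bool) \sum_(c : bool) F (a, b, c).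
Proof. by rewrite pair_bigA pair_bigA; apply: eq_bigr => [[[a b] c]]. Qed.

Definition observed_at_risk (u : bool * bool * bool) : bool :=
  if u.1.1 then u.1.2 else u.2.

Definition treated_at_risk (u : bool * bool * bool) : bool := u.1.1 && u.1.2.

Section null_profile.
Context {R : realType} {n : nat} {d : measure_display} {Omega : measurableType d}.
Variables (P : probability Omega R) (C1 C0 : 'I_n -> Omega -> \bar R).
Variables (Z : 'I_n -> Omega -> bool) (p1 t g1 g0 : R).
Hypothesis mZ : forall i, measurable [set w | Z i w].
Hypothesis mC1 : forall i, measurable_fun setT (C1 i).
Hypothesis mC0 : forall i, measurable_fun setT (C0 i).
Hypothesis A1 : assumption1 P Z C1 C0 p1.
Hypothesis A2 : assumption2 P C1 C0.
Hypothesis C1_at_risk : forall i, P [set w | (t%:E <= C1 i w)%E] = g1%:E.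
Hypothesis C0_at_risk : forall i, P [set w | (t%:E <= C0 i w)%E] = g0%:E.

Definition at_risk (C : 'I_n -> Omega -> \bar R) i w : bool := (t%:E <= C i w)%E.

Definition profile w : {ffun 'I_n -> bool * bool * bool} :=
  [ffun i => (Z i w, at_risk C1 i w, at_risk C0 i w)].

Definition cens_law i (b1 b0 : bool) : R :=
  fine (P [set w | at_risk C1 i w = b1 /\ at_risk C0 i w = b0]).

Definition profile_weight i (u : bool * bool * bool) : R :=
  (if u.1.1 then p1 else 1 - p1) * cens_law i u.1.2 u.2.

Lemma measurable_at_risk (C : 'I_n -> Omega -> \bar R) i b :
  measurable_fun setT (C i) -> measurable [set w | at_risk C i w = b].
Proof.
move=> mC; apply: measurable_eqb.
by have := mC measurableT _ (measurable_ge_ereal t); rewrite setTI.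
Qed.

Lemma measurable_cens_event i b1 b0 :
  measurable [set w | at_risk C1 i w = b1 /\ at_risk C0 i w = b0].
Proof.
exact: measurableI (measurable_at_risk _ (mC1 i)) (measurable_at_risk _ (mC0 i)).
Qed.

Lemma profile_eqE y : [set w | profile w = y] =
  [set w | forall i, Z i w = (y i).1.1 /\
    at_risk C1 i w = (y i).1.2 /\ at_risk C0 i w = (y i).2].
Proof.
apply/seteqP; split => w /=; first by move=> <- i; rewrite ffunE.
move=> yw; apply/ffunP => i; rewrite ffunE.
by case: (yw i) => -> [-> ->]; case: (y i) => [[]].
Qed.

Lemma measurable_profile y : measurable [set w | profile w = y].
Proof.
rewrite profile_eqE; apply: measurable_forall => i.
apply: measurableI; first exact: measurable_eqb.
exact: measurable_cens_event.
Qed.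

(* Assumption 1 factors out the treatments, Assumption 2 the censoring pairs. *)
Lemma profile_law y :
  P [set w | profile w = y] = (\prod_i profile_weight i (y i))%:E.
Proof.
pose atR (b : bool) := [set c : \bar R | (t%:E <= c)%E = b].
have matR b : measurable (atR b) by apply: measurable_eqb; exact: measurable_ge_ereal.
have mA i := conj (matR (y i).1.2) (matR (y i).2).
rewrite profile_eqE (A1 _ mA) (A2.1 _ _ mA) -prodEFin -big_split -[RHS]prodEFin.
apply: eq_bigr => i _; rewrite /profile_weight /cens_law EFinM fineK //.
exact: fin_num_measure (measurable_cens_event _ _ _).
Qed.

Lemma cens_law_marg1 i b1 :
  cens_law i b1 true + cens_law i b1 false = fine (P [set w | at_risk C1 i w = b1]).
Proof.
rewrite -(measure_split_bool P (measurable_at_risk b1 (mC1 i))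
  (measurable_at_risk true (mC0 i))).
by rewrite fineD // fin_num_measure //; exact: measurable_cens_event.
Qed.

Lemma cens_law_marg0 i b0 :
  cens_law i true b0 + cens_law i false b0 = fine (P [set w | at_risk C0 i w = b0]).
Proof.
rewrite -(measure_split_bool P (measurable_at_risk b0 (mC0 i))
  (measurable_at_risk true (mC1 i))).
rewrite ![[set w | at_risk C0 i w = b0] `&` _]setIC.
by rewrite fineD // fin_num_measure //; exact: measurable_cens_event.
Qed.

Lemma sum_cens_law i : \sum_b1 \sum_b0 cens_law i b1 b0 = 1.
Proof.
rewrite !big_bool /= !cens_law_marg1 -fineD ?fin_num_measure //;
  try exact: measurable_at_risk _ (mC1 i).
rewrite -[RHS]/(fine 1%E) -(probability_setT P).
by rewrite -(measure_split_bool P measurableT (measurable_at_risk true (mC1 i))) !setTI.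
Qed.

Lemma sum_profile_weight i : \sum_u profile_weight i u = 1.
Proof. by rewrite sum_bool3 -(sum_cens_law i) !big_bool /= /profile_weight /=; ring. Qed.

Lemma cens_law_at_risk1 i : cens_law i true true + cens_law i true false = g1.
Proof. by rewrite cens_law_marg1 (C1_at_risk i). Qed.

Lemma cens_law_at_risk0 i : cens_law i true true + cens_law i false true = g0.
Proof. by rewrite cens_law_marg0 (C0_at_risk i). Qed.

Lemma profile_weight_observed i :
  \sum_(u | observed_at_risk u) profile_weight i u = p1 * g1 + (1 - p1) * g0.
Proof.
rewrite big_mkcond sum_bool3 !big_bool /= /profile_weight /=.
by rewrite -(cens_law_at_risk1 i) -(cens_law_at_risk0 i); ring.
Qed.

Lemma profile_weight_treated i :
  \sum_(u | treated_at_risk u) profile_weight i u = p1 * g1.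
Proof.
rewrite big_mkcond sum_bool3 !big_bool /= /profile_weight /=.
by rewrite -(cens_law_at_risk1 i); ring.
Qed.

Lemma count_profile_binomial (S : {set 'I_n}) (f : pred (bool * bool * bool)) q j :
  (forall i, i \in S -> \sum_(u | f u) profile_weight i u = q) ->
  P [set w | (\sum_(i in S) f (profile w i))%N = j] = (binomial_pmf #|S| q j)%:E.
Proof.
move=> fS.
pose count_is_j (y : {ffun 'I_n -> bool * bool * bool}) := (\sum_(i in S) f (y i) == j)%N.
have -> : [set w | (\sum_(i in S) f (profile w i))%N = j] =
    [set w | count_is_j (profile w)].
  by apply/seteqP; split => w /= /eqP.
rewrite (measure_preimage_pred P count_is_j measurable_profile).
rewrite (eq_bigr (fun y : {ffun 'I_n -> _} => (\prod_i profile_weight i (y i))%:E));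
  last by move=> y _; exact: profile_law.
rewrite sumEFin; congr EFin.
exact: sum_prod_count_binomial sum_profile_weight fS.
Qed.

End null_profile.

Lemma le_min_eqE (R : realDomainType) (a t : R) (c : \bar R) :
  ((a%:E <= c)%E && (Order.min a%:E c == t%:E)) = (a == t) && (t%:E <= c)%E.
Proof.
case: (leP a%:E c) => [ac | ca] /=.
  by rewrite eqe; case: eqP => // a_t; rewrite -a_t ac.
by case: eqP => // a_t; rewrite -a_t leNgt ca.
Qed.

Lemma mul_div_addK (R : numFieldType) (a b : R) :
  0 <= a -> 0 <= b -> (a + b) * (a / (a + b)) = a.
Proof.
move=> a_ge0 b_ge0; have [/eqP | ab_neq0] := eqVneq (a + b) 0.
  by rewrite paddr_eq0 // => /andP[/eqP -> _]; rewrite mul0r mulr0.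
by rewrite mulrC divfK.
Qed.

Section null_hypothesis.
Context {R : realType} {n : nat} {d : measure_display} {Omega : measurableType d}.
Variables (T1 T0 : 'I_n -> R) (C1 C0 : 'I_n -> Omega -> \bar R).
Variables (Z : 'I_n -> Omega -> bool) (t : R).
Hypothesis H0 : forall i, T1 i = T0 i.

Lemma obsT_null i w : obsT T1 T0 Z i w = T0 i.
Proof. by rewrite /obsT H0 if_same. Qed.

Lemma obsC_at_risk i w :
  (t%:E <= obsC C1 C0 Z i w)%E = observed_at_risk (profile C1 C0 Z t w i).
Proof. by rewrite ffunE /obsC /observed_at_risk /=; case: (Z i w). Qed.

Lemma cntD_null w : cntD T1 T0 C1 C0 Z t w =
  (\sum_(i in [set i | T0 i == t]%SET) observed_at_risk (profile C1 C0 Z t w i))%N.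
Proof.
rewrite /cntD [RHS]big_mkcond; apply: eq_bigr => i _.
by rewrite /obsDelta /obsW obsT_null le_min_eqE obsC_at_risk inE; case: (T0 i == t).
Qed.

Lemma cntN1_null w : cntN1 T1 T0 C1 C0 Z t w =
  (\sum_(i in [set i | (t <= T0 i)%R]%SET) treated_at_risk (profile C1 C0 Z t w i))%N.
Proof.
rewrite /cntN1 [RHS]big_mkcond; apply: eq_bigr => i _.
rewrite /obsW obsT_null le_min lee_fin obsC_at_risk inE ffunE.
by rewrite /treated_at_risk /observed_at_risk /=; case: (Z i w); case: (t <= T0 i).
Qed.

Lemma cntN_null w : cntN T1 T0 C1 C0 Z t w =
  (\sum_(i in [set i | (t <= T0 i)%R]%SET) observed_at_risk (profile C1 C0 Z t w i))%N.
Proof.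
rewrite /cntN [RHS]big_mkcond; apply: eq_bigr => i _.
by rewrite /obsW obsT_null le_min lee_fin obsC_at_risk inE; case: (t <= T0 i).
Qed.

End null_hypothesis.

Theorem lemmaA4 (R : realType) (n : nat) (d : measure_display)
  (Omega : measurableType d) (P : probability Omega R)
  (T1 T0 : 'I_n -> R) (C1 C0 : 'I_n -> Omega -> \bar R)
  (Z : 'I_n -> Omega -> bool) (p1 : R) (G1 G0 : R -> R) :
  0 < p1 < 1 ->
  (forall i, 0 <= T1 i /\ 0 <= T0 i) ->
  (forall i w, (0 <= C1 i w)%E /\ (0 <= C0 i w)%E) ->
  (forall i, measurable [set w | Z i w]) ->
  (forall i, measurable_fun setT (C1 i) /\ measurable_fun setT (C0 i)) ->
  assumption1 P Z C1 C0 p1 ->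
  assumption2 P C1 C0 ->
  (* G_z(c) = Pr(C_i(z) >= c) *)
  (forall i c, P [set w | (c%:E <= C1 i w)%E] = (G1 c)%:E) ->
  (forall i c, P [set w | (c%:E <= C0 i w)%E] = (G0 c)%:E) ->
  (* null hypothesis H0 *)
  (forall i, T1 i = T0 i) ->
  let G := fun t => p1 * G1 t + (1 - p1) * G0 t in
  let ts := distinct_times T0 in
  forall k : nat, (k < size ts)%N ->
    let tk := nth 0 ts k in
    let gk := G tk in
    let phik := p1 * G1 tk / G tk in
    (forall j : nat, P [set w | cntD T1 T0 C1 C0 Z tk w = j] =
                     (binomial_pmf (d_at T0 tk) gk j)%:E) /\
    (forall j : nat, P [set w | cntN1 T1 T0 C1 C0 Z tk w = j] =
                     (binomial_pmf (n_at T0 tk) (gk * phik) j)%:E) /\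
    (forall j : nat, P [set w | cntN T1 T0 C1 C0 Z tk w = j] =
                     (binomial_pmf (n_at T0 tk) gk j)%:E).
Proof.
move=> /andP[p1_gt0 p1_lt1] _ _ mZ mC A1 A2 G1E G0E H0 G ts k _ tk gk phik.
have mC1 i := (mC i).1; have mC0 i := (mC i).2.
have bin := count_profile_binomial mZ mC1 mC0 A1 A2.
have observedE i := profile_weight_observed p1 mC1 mC0 (G1E^~ tk) (G0E^~ tk) i.
split; [|split] => j.
- rewrite (funext (cntD_null C1 C0 Z tk H0)) /d_at card_set_finset.
  by apply: bin => i _; exact: observedE.
- rewrite (funext (cntN1_null C1 C0 Z tk H0)) /n_at card_set_finset.
  apply: bin => i _; rewrite (profile_weight_treated p1 mC1 mC0 (G1E^~ tk)).
  have G1_ge0 : 0 <= G1 tk by rewrite -lee_fin -(G1E i tk).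
  have G0_ge0 : 0 <= G0 tk by rewrite -lee_fin -(G0E i tk).
  have p1_ge0 : 0 <= p1 := ltW p1_gt0.
  have p0_ge0 : 0 <= 1 - p1 by rewrite subr_ge0 ltW.
  by rewrite /gk /phik /G mul_div_addK // mulr_ge0.
- rewrite (funext (cntN_null C1 C0 Z tk H0)) /n_at card_set_finset.
  by apply: bin => i _; exact: observedE.
Qed.
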